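(* Let $A\in \mathbb{Z}^{m\times n}$, $b\in \mathbb{Z}^m$, and $P:=\{x\in\mathbb{R}^n:Ax\leq b\}$. For a nonempty face $F$ of $P$, denote by $A_Fx\leq b_F$ the subsystem of $Ax\leq b$ consisting of the implicit equalities of $F$, i.e. those inequalities $a_i^\top x\le b_i$ of $Ax\le b$ with $a_i^\top x=b_i$ for all $x\in F$. Then for every prime $p$ the following are equivalent: (1) $Ax\leq b$ is totally dual $p$-adic; (2) for every nonempty face $F$ of $P$, the rows of $A_F$ form a $p$-adic generating set for a cone; (3) for every nonempty face $F$ of $P$, the rows of $A_F$ form a $p$-adic generating set for a subspace.
   Context: Let $p$ be a prime. A $p$-adic rational is a number of the form $a/p^k$ with $a,k$ integers and $k\ge 0$; a vector is $p$-adic if all its entries are $p$-adic rationals. A system $Ax\le b$ with $A\in\mathbb{Z}^{m\times n}$, $b\in\mathbb{Z}^m$ is totally dual $p$-adic if for every $w\in\mathbb{Z}^n$ for which $\min\{b^\top y: A^\top y=w,\ y\ge \mathbf{0}\}$ has an optimal solution, it has a $p$-adic optimal solution. A finite set $\{a^1,\dots,a^n\}\subseteq\mathbb{Z}^m$ is a $p$-adic generating set for a cone if every integral vector in its conic hull is a conic combination of $a^1,\dots,a^n$ with $p$-adic coefficients; it is a $p$-adic generating set for a subspace if every integral vector in its linear hull is a linear combination of $a^1,\dots,a^n$ with $p$-adic coefficients. *)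

From HB Require Import structures.
From mathcomp Require Import all_boot all_order all_algebra.
From mathcomp Require Import reals.
Set Implicit Arguments. Unset Strict Implicit. Unset Printing Implicit Defensive.
Import Order.TTheory GRing.Theory Num.Theory.
Local Open Scope ring_scope.

Section Defs.
Variable R : realType.

Definition mxR (k l : nat) (M : 'M[int]_(k, l)) : 'M[R]_(k, l) :=
  map_mx (fun z : int => z%:~R) M.

Definition padic (p : nat) (x : R) : Prop :=
  exists (a : int) (k : nat), x = a%:~R / (p%:R ^+ k).

Variables (m n : nat).

Definition polyhedron (A : 'M[int]_(m, n)) (b : 'cV[int]_m) (x : 'cV[R]_n) : Prop :=
  forall i : 'I_m, (mxR A *m x) i 0 <= mxR b i 0.

Definition is_face (P F : 'cV[R]_n -> Prop) : Prop :=
  exists (c : 'cV[R]_n) (d : R),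
    (forall x, P x -> (c^T *m x) 0 0 <= d) /\
    (forall x, F x <-> (P x /\ (c^T *m x) 0 0 = d)).

Definition implicit_eq (A : 'M[int]_(m, n)) (b : 'cV[int]_m)
  (F : 'cV[R]_n -> Prop) (i : 'I_m) : Prop :=
  forall x, F x -> (mxR A *m x) i 0 = mxR b i 0.

Definition dual_feasible (A : 'M[int]_(m, n)) (w : 'cV[int]_n) (y : 'cV[R]_m) : Prop :=
  (mxR A)^T *m y = mxR w /\ forall i, 0 <= y i 0.

Definition dual_optimal (A : 'M[int]_(m, n)) (b : 'cV[int]_m) (w : 'cV[int]_n)
  (y : 'cV[R]_m) : Prop :=
  dual_feasible A w y /\
  forall y', dual_feasible A w y' -> ((mxR b)^T *m y) 0 0 <= ((mxR b)^T *m y') 0 0.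

Definition totally_dual_padic (p : nat) (A : 'M[int]_(m, n)) (b : 'cV[int]_m) : Prop :=
  forall w : 'cV[int]_n,
    (exists y, dual_optimal A b w y) ->
    exists y, dual_optimal A b w y /\ forall i, padic p (y i 0).

Definition padic_gen_cone (p : nat) (A : 'M[int]_(m, n)) (I : 'I_m -> Prop) : Prop :=
  forall w : 'rV[int]_n,
    (exists lam : 'I_m -> R, (forall i, 0 <= lam i) /\ (forall i, ~ I i -> lam i = 0) /\
        mxR w = \sum_(i < m) lam i *: mxR (row i A)) ->
    exists lam : 'I_m -> R, (forall i, 0 <= lam i /\ padic p (lam i)) /\
        (forall i, ~ I i -> lam i = 0) /\
        mxR w = \sum_(i < m) lam i *: mxR (row i A).

Definition padic_gen_subspace (p : nat) (A : 'M[int]_(m, n)) (I : 'I_m -> Prop) : Prop :=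
  forall w : 'rV[int]_n,
    (exists lam : 'I_m -> R, (forall i, ~ I i -> lam i = 0) /\
        mxR w = \sum_(i < m) lam i *: mxR (row i A)) ->
    exists lam : 'I_m -> R, (forall i, padic p (lam i)) /\
        (forall i, ~ I i -> lam i = 0) /\
        mxR w = \sum_(i < m) lam i *: mxR (row i A).

End Defs.

(* (1) => (2): if w = sum_i lam_i a_i with lam >= 0 supported on the implicit
   equalities of a face F, then lam is a dual optimal solution for the
   objective w, since every point of F attains its cost.  By (1) there is a
   p-adic optimal solution, and complementary slackness against the points of
   F forces it to be supported on the implicit equalities of F as well.
   (2) => (3): shifting the coefficients by integers makes them nonnegative.
   (3) => (1): strict complementarity gives a dual optimal y whose support is
   exactly the set of implicit equalities of the optimal face F.  For a large
   power N = p^k write N y = r + f with r integral and 0 <= f < 1.  Then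
   A_F^T f = N w - A^T r is an integral vector of bounded size, so by (3) it
   has a p-adic representation nu on the rows of A_F, of uniformly bounded
   size, and (r + nu) / N is a nonnegative p-adic dual solution supported on
   the implicit equalities of F, hence optimal.  Strong duality and strict
   complementarity come from Farkas' lemma, proved by Fourier-Motzkin
   elimination. *)

From HB Require Import structures.
From mathcomp Require Import all_boot all_order all_algebra.
From mathcomp Require Import boolp reals.
From mathcomp Require Import ring lra zify.
Import Order.TTheory GRing.Theory Num.Theory.
Local Open Scope ring_scope.
Set Implicit Arguments. Unset Strict Implicit. Unset Printing Implicit Defensive.

Section Farkas.
Variable R : realFieldType.

Lemma sum_delta_mul (I : finType) (i : I) (f : I -> R) :
  \sum_k (k == i)%:R * f k = f i.
Proof.
rewrite (bigD1 i) //= eqxx mul1r big1 ?addr0 // => k /negbTE ->; by rewrite mul0r.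
Qed.

Lemma sum_option (I : finType) (F : option I -> R) :
  \sum_k F k = F None + \sum_i F (Some i).
Proof.
rewrite (bigD1 None) //= (reindex_omap Some id) => [|[] //].
by congr (_ + _); apply: eq_bigl => i; rewrite eqxx.
Qed.

Lemma finite_interpolation (L U : seq R) :
  {in L & U, forall l u, l <= u} ->
  exists t, {in L, forall l, l <= t} /\ {in U, forall u, t <= u}.
Proof.
elim: L => [_|l L IH hLU].
  elim: U => [|u U [t [_ htU]]]; first by exists 0.
  exists (Num.min u t); split => // v; rewrite inE ge_min => /predU1P [->|/htU ->].
    by rewrite lexx.
  by rewrite orbT.
have [|t [htL htU]] := IH; first by move=> l' u hl' hu; apply: hLU; rewrite ?inE ?hl' ?orbT.
exists (Num.max l t); split => [l'|u hu]; last by rewrite ge_max htU // hLU ?mem_head.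
rewrite inE le_max => /predU1P [->|/htL ->]; by rewrite ?lexx ?orbT.
Qed.

Variable J : finType.

Definition dot (a x : J -> R) := \sum_j a j * x j.

Definition feasible (I : finType) (a : I -> J -> R) (be : I -> R) :=
  exists x : J -> R, forall i, dot (a i) x <= be i.

Definition farkas_certificate (I : finType) (a : I -> J -> R) (be : I -> R) :=
  exists y : I -> R,
    [/\ forall i, 0 <= y i, forall j, \sum_i y i * a i j = 0 & \sum_i y i * be i < 0].

Lemma farkas_certificate_comb (I1 I2 : finType) (a1 : I1 -> J -> R) (b1 : I1 -> R)
    (a2 : I2 -> J -> R) (b2 : I2 -> R) (c : I2 -> I1 -> R) :
  (forall i2 i1, 0 <= c i2 i1) ->
  (forall i2 j, a2 i2 j = \sum_i1 c i2 i1 * a1 i1 j) ->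
  (forall i2, b2 i2 = \sum_i1 c i2 i1 * b1 i1) ->
  farkas_certificate a2 b2 -> farkas_certificate a1 b1.
Proof.
move=> c0 ha hb [y [y0 ya yb]].
have comb f : \sum_i1 (\sum_i2 y i2 * c i2 i1) * f i1 =
              \sum_i2 y i2 * \sum_i1 c i2 i1 * f i1.
  under eq_bigr do rewrite mulr_suml.
  rewrite exchange_big; apply: eq_bigr => i2 _.
  by rewrite mulr_sumr; apply: eq_bigr => i1 _; rewrite mulrA.
exists (fun i1 => \sum_i2 y i2 * c i2 i1); split.
- by move=> i1; apply: sumr_ge0 => i2 _; apply: mulr_ge0.
- by move=> j; rewrite (comb (a1^~ j)) -[RHS](ya j); apply: eq_bigr => i2 _; rewrite ha.
- by rewrite comb; under eq_bigr do rewrite -hb.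
Qed.

Definition set_coord (x : J -> R) (j0 : J) (t : R) : J -> R :=
  fun j => if j == j0 then t else x j.

Lemma dot_set_coord (a x : J -> R) j0 t :
  dot a (set_coord x j0 t) = dot a x + a j0 * (t - x j0).
Proof.
rewrite /dot (bigD1 j0) //= [in RHS](bigD1 j0) //= /set_coord eqxx.
rewrite (eq_bigr (fun j => a j * x j)) => [|j /negbTE -> //].
by rewrite mulrBr; lra.
Qed.

Section FourierMotzkin.
Variables (I : finType) (a : I -> J -> R) (be : I -> R) (j0 : J).

(* The eliminated system has the rows of [a] with [a i j0 = 0] and the
   combinations [- a n j0 * a p + a p j0 * a n] for [a p j0 > 0 > a n j0];
   the remaining indices of [I + I * I] carry the trivial row [0 <= 0]. *)
Definition fm_pair (p n : I) := (0 < a p j0) && (a n j0 < 0).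

Definition fm_coef (k : I + I * I) (i : I) : R :=
  match k with
  | inl i' => if a i' j0 == 0 then (i == i')%:R else 0
  | inr (p, n) => if fm_pair p n then - a n j0 * (i == p)%:R + a p j0 * (i == n)%:R
                  else 0
  end.

Definition fm_row (k : I + I * I) (j : J) := \sum_i fm_coef k i * a i j.
Definition fm_rhs (k : I + I * I) := \sum_i fm_coef k i * be i.

Lemma fm_coef_ge0 k i : 0 <= fm_coef k i.
Proof.
case: k => [i'|[p n]] /=; first by case: ifP.
case: ifP => // /andP [hp hn].
by apply: addr_ge0; apply: mulr_ge0 => //; lra.
Qed.

Lemma fm_coef_sum (f : I -> R) k :
  \sum_i fm_coef k i * f i =
  match k with
  | inl i' => if a i' j0 == 0 then f i' else 0
  | inr (p, n) => if fm_pair p n then - a n j0 * f p + a p j0 * f n else 0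
  end.
Proof.
case: k => [i'|[p n]] /=; case: ifP => _; do ?by rewrite big1 // => *; rewrite mul0r.
  exact: sum_delta_mul.
under eq_bigr do rewrite mulrDl -!mulrA.
by rewrite big_split /= -!mulr_sumr !sum_delta_mul.
Qed.

Lemma fm_row_pivot k : fm_row k j0 = 0.
Proof.
rewrite /fm_row fm_coef_sum; case: k => [i'|[p n]]; case: ifP => //; first by move/eqP.
by rewrite mulrC; lra.
Qed.

Lemma fm_row_eq0 k j : (forall i, a i j = 0) -> fm_row k j = 0.
Proof. by move=> h; rewrite /fm_row big1 // => i _; rewrite h mulr0. Qed.

(* The value of coordinate [j0] at which row [i] becomes tight. *)
Definition fm_bound (x : J -> R) (i : I) := x j0 + (be i - dot (a i) x) / a i j0.

Lemma fm_bound_upper x i t : 0 < a i j0 -> t <= fm_bound x i ->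
  dot (a i) (set_coord x j0 t) <= be i.
Proof.
move=> hi; rewrite dot_set_coord /fm_bound -lerBlDl ler_pdivlMr // => h.
by rewrite -lerBrDl mulrC.
Qed.

Lemma fm_bound_lower x i t : a i j0 < 0 -> fm_bound x i <= t ->
  dot (a i) (set_coord x j0 t) <= be i.
Proof.
move=> hi; rewrite dot_set_coord /fm_bound -lerBrDl ler_ndivrMr // => h.
by rewrite -lerBrDl mulrC.
Qed.

Lemma dot_fm_row x k : dot (fm_row k) x = \sum_i fm_coef k i * dot (a i) x.
Proof.
rewrite /dot /fm_row; under eq_bigr do rewrite mulr_suml.
rewrite exchange_big; apply: eq_bigr => i _.
by rewrite mulr_sumr; apply: eq_bigr => j _; rewrite mulrA.
Qed.

Lemma fm_bound_sep x p n : (forall k, dot (fm_row k) x <= fm_rhs k) ->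
  0 < a p j0 -> a n j0 < 0 -> fm_bound x n <= fm_bound x p.
Proof.
move=> hx hp hn; have := hx (inr (p, n)).
rewrite dot_fm_row /fm_rhs !fm_coef_sum /fm_pair hp hn /= /fm_bound lerD2l.
by rewrite ler_ndivrMr // mulrAC ler_pdivrMr //; nra.
Qed.

Lemma fm_feasible : feasible fm_row fm_rhs -> feasible a be.
Proof.
move=> [x hx].
have [|t [htL htU]] := @finite_interpolation
    [seq fm_bound x n | n <- enum I & a n j0 < 0]
    [seq fm_bound x p | p <- enum I & 0 < a p j0].
  move=> _ _ /mapP [n + ->] /mapP [p + ->].
  by rewrite !mem_filter => /andP [hn _] /andP [hp _]; apply: fm_bound_sep.
exists (set_coord x j0 t) => i.
case: (ltrgtP (a i j0) 0) => hi.
- by apply: fm_bound_lower => //; apply: htL; rewrite map_f // mem_filter hi mem_enum.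
- by apply: fm_bound_upper => //; apply: htU; rewrite map_f // mem_filter hi mem_enum.
- have := hx (inl i); rewrite dot_fm_row /fm_rhs !fm_coef_sum /= hi eqxx.
  by rewrite dot_set_coord hi mul0r addr0.
Qed.

End FourierMotzkin.

Lemma farkas_supp (S : {set J}) (I : finType) (a : I -> J -> R) (be : I -> R) :
  (forall i j, j \notin S -> a i j = 0) -> ~ feasible a be -> farkas_certificate a be.
Proof.
have [N hS] : exists N, #|S| = N by eexists.
elim: N S I a be hS => [|N IH] S I a be hS ha hinf.
  rewrite (cards0_eq hS) in ha.
  have [/forallP hb|] := boolP [forall i, 0 <= be i].
    exfalso; apply: hinf; exists (fun _ => 0) => i.
    by rewrite /dot big1 // => j _; rewrite mulr0.
  rewrite negb_forall => /existsP [i hi].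
  exists (fun k => (k == i)%:R); split => [k|j|]; rewrite ?sum_delta_mul ?ltNge //.
  by rewrite ha ?inE.
have /set0Pn [j0 hj0] : S != set0 by rewrite -card_gt0 hS.
apply: (farkas_certificate_comb (c := fm_coef a j0)) => //.
- exact: fm_coef_ge0.
apply: (IH (S :\ j0)).
- by move: hS; rewrite (cardsD1 j0) hj0 add1n => -[].
- move=> r j; rewrite !inE negb_and negbK => /orP [/eqP ->|hj].
    exact: fm_row_pivot.
  by apply: fm_row_eq0 => i; rewrite ha.
- by move/fm_feasible.
Qed.

Lemma farkas (I : finType) (a : I -> J -> R) (be : I -> R) :
  ~ feasible a be -> farkas_certificate a be.
Proof. by apply: (farkas_supp (S := setT)) => i j; rewrite inE. Qed.

End Farkas.

Section LinearProgramming.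
Variable R : realType.
Variables (m n : nat) (A : 'M[int]_(m, n)) (b : 'cV[int]_m).
Implicit Types (x : 'cV[R]_n) (y ys : 'cV[R]_m) (w : 'cV[int]_n).

Definition aR i j : R := (A i j)%:~R.
Definition bR i : R := (b i 0)%:~R.
Definition Ax (x : 'cV[R]_n) i := \sum_j aR i j * x j 0.
Definition obj (w : 'cV[int]_n) (x : 'cV[R]_n) := \sum_j (w j 0)%:~R * x j 0.
Definition dual_cost (y : 'cV[R]_m) := \sum_i y i 0 * bR i.

Definition combines (lam : 'I_m -> R) (v : 'I_n -> int) :=
  forall j, \sum_i lam i * aR i j = (v j)%:~R.

Lemma AxE x i : (mxR R A *m x) i 0 = Ax x i.
Proof. by rewrite mxE; apply: eq_bigr => j _; rewrite mxE. Qed.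

Lemma polyhedronE x : polyhedron A b x <-> forall i, Ax x i <= bR i.
Proof. by split => h i; move: (h i); rewrite AxE /bR mxE. Qed.

Lemma objE w x : ((mxR R w)^T *m x) 0 0 = obj w x.
Proof. by rewrite mxE; apply: eq_bigr => j _; rewrite !mxE. Qed.

Lemma dual_costE y : ((mxR R b)^T *m y) 0 0 = dual_cost y.
Proof. by rewrite mxE; apply: eq_bigr => i _; rewrite !mxE mulrC. Qed.

Lemma dual_feasibleE w y : dual_feasible A w y <->
  combines (fun i => y i 0) (fun j => w j 0) /\ forall i, 0 <= y i 0.
Proof.
split => -[h hy]; split => //.
- move=> j; move/matrixP: h => /(_ j 0); rewrite !mxE => <-.
  by apply: eq_bigr => i _; rewrite !mxE mulrC.
- apply/matrixP => j k; rewrite (ord1 k) !mxE -h.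
  by apply: eq_bigr => i _; rewrite !mxE mulrC.
Qed.

Lemma combinesE (v : 'rV[int]_n) lam :
  mxR R v = \sum_(i < m) lam i *: mxR R (row i A) <-> combines lam (v 0).
Proof.
have e j : (\sum_(i < m) lam i *: mxR R (row i A)) 0 j = \sum_i lam i * aR i j.
  by rewrite summxE; apply: eq_bigr => i _; rewrite !mxE.
split => [/matrixP h j|h]; first by rewrite -e -h mxE.
by apply/matrixP => i j; rewrite (ord1 i) e h mxE.
Qed.

Lemma dual_gap w y x : dual_feasible A w y ->
  dual_cost y - obj w x = \sum_i y i 0 * (bR i - Ax x i).
Proof.
move/dual_feasibleE => [hw _].
have -> : obj w x = \sum_i y i 0 * Ax x i.
  rewrite /obj; under eq_bigr do rewrite -hw mulr_suml.
  rewrite exchange_big; apply: eq_bigr => i _ /=.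
  by rewrite /Ax mulr_sumr; apply: eq_bigr => j _; rewrite mulrA.
by rewrite /dual_cost -sumrB; apply: eq_bigr => i _; rewrite mulrBr.
Qed.

Lemma weak_duality w y x : dual_feasible A w y -> polyhedron A b x ->
  obj w x <= dual_cost y.
Proof.
move=> hy /polyhedronE hx; rewrite -subr_ge0 (dual_gap _ hy).
apply: sumr_ge0 => i _; apply: mulr_ge0; first by case/dual_feasibleE: hy.
by rewrite subr_ge0.
Qed.

Lemma complementary_slackness w y x : dual_feasible A w y -> polyhedron A b x ->
  obj w x = dual_cost y -> forall i, y i 0 = 0 \/ Ax x i = bR i.
Proof.
move=> hy /polyhedronE hx he i.
have h0 : \sum_i y i 0 * (bR i - Ax x i) = 0 by rewrite -(dual_gap _ hy) he subrr.
have /psumr_eq0P /(_ h0 i isT) /eqP : forall k, true -> 0 <= y k 0 * (bR k - Ax x k).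
  by move=> k _; apply: mulr_ge0; [case/dual_feasibleE: hy|rewrite subr_ge0].
by rewrite mulf_eq0 subr_eq0 => /orP [] /eqP; [left|right].
Qed.

Lemma dual_optimal_cost w y y' : dual_optimal A b w y -> dual_optimal A b w y' ->
  dual_cost y = dual_cost y'.
Proof.
move=> [hy ho] [hy' ho']; apply/le_anti.
by have := ho _ hy'; have := ho' _ hy; rewrite !dual_costE => -> ->.
Qed.

Lemma dual_optimal_mid w y y' : dual_optimal A b w y -> dual_optimal A b w y' ->
  dual_optimal A b w (2^-1 *: (y + y')).
Proof.
move=> hoy hoy'; have [[hy hy0] ho] := hoy; have [[hy' hy'0] _] := hoy'.
have hc := dual_optimal_cost hoy hoy'.
have h2 : (2 : R) != 0 by rewrite pnatr_eq0.
split; first split.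
- by rewrite -scalemxAr mulmxDr hy hy' -mulr2n -scaler_nat scalerA mulVf // scale1r.
- by move=> i; rewrite !mxE mulr_ge0 ?addr_ge0 ?invr_ge0 ?ler0n.
- move=> z hz; rewrite -scalemxAr mulmxDr mxE [X in _ * X]mxE !dual_costE -hc.
  by have := ho _ hz; rewrite !dual_costE; lra.
Qed.

Lemma dual_feasible_mix w ys (u : 'I_m -> R) t :
  dual_feasible A w ys -> 0 <= t -> (forall i, 0 <= u i) ->
  (forall j, \sum_i u i * aR i j = t * (w j 0)%:~R) ->
  dual_feasible A w (\col_i ((u i + ys i 0) / (t + 1))) /\
  dual_cost (\col_i ((u i + ys i 0) / (t + 1))) =
    (\sum_i u i * bR i + dual_cost ys) / (t + 1).
Proof.
move=> /dual_feasibleE [hw hy] ht hu hua.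
have ht1 : t + 1 != 0 by rewrite gt_eqF //; lra.
split; last first.
  by rewrite /dual_cost -big_split /= mulr_suml; apply: eq_bigr => i _; rewrite mxE; field.
apply/dual_feasibleE; split => [j|i]; last by rewrite mxE divr_ge0 ?addr_ge0 //; lra.
have -> : (w j 0)%:~R = (t * (w j 0)%:~R + (w j 0)%:~R) / (t + 1) :> R by field.
by rewrite -hua -hw -big_split /= mulr_suml; apply: eq_bigr => i _ /=; rewrite mxE; field.
Qed.

Lemma strong_duality w ys : dual_optimal A b w ys ->
  exists x, polyhedron A b x /\ obj w x = dual_cost ys.
Proof.
move=> [hy hopt].
suff [x [hx hge]] : exists x, polyhedron A b x /\ dual_cost ys <= obj w x.
  by exists x; split => //; apply/le_anti; rewrite hge weak_duality.
apply: contrapT => hne.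
pose a (k : option 'I_m) j : R := if k is Some i then aR i j else - (w j 0)%:~R.
pose be (k : option 'I_m) : R := if k is Some i then bR i else - dual_cost ys.
have /farkas [y [y0 ya yb]] : ~ feasible a be.
  move=> [x hx]; apply: hne; exists (\col_j x j).
  have hcol f : \sum_j f j * (\col_j x j) j 0 = dot f x.
    by apply: eq_bigr => j _; rewrite mxE.
  split; first by apply/polyhedronE => i; rewrite /Ax hcol; apply: hx (Some i).
  rewrite /obj hcol; have := hx None; rewrite /dot.
  by under eq_bigr do rewrite mulNr; rewrite sumrN lerN2.
pose t := y None; pose u i := y (Some i).
have hua j : \sum_i u i * aR i j = t * (w j 0)%:~R.
  by have := ya j; rewrite sum_option /= /u /t; lra.
have [hy' hc'] := dual_feasible_mix hy (y0 None) (fun i => y0 (Some i)) hua.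
have ht1 : 0 < t + 1 by have := y0 None; rewrite /t; lra.
have := hopt _ hy'; rewrite !dual_costE hc' ler_pdivlMr //.
by move: yb; rewrite sum_option /= /u /t; lra.
Qed.

(* Homogenization of "A x <= b, w^T x >= c, (A x)_i0 <= b_i0 - 1": column
   [None] is the homogenizing variable [s], row [Some None] reads [s <= 0],
   and a solution [(z, s)] yields the point [(z + x0) / (1 - s)]. *)
Definition strict_row (c : R) (w : 'cV[int]_n) (k : option (option 'I_m))
    (j : option 'I_n) : R :=
  match k, j with
  | Some (Some i), Some j => aR i j
  | Some (Some i), None => bR i
  | Some None, Some _ => 0
  | Some None, None => 1
  | None, Some j => - (w j 0)%:~R
  | None, None => - c
  end.

Definition strict_rhs (i0 : 'I_m) (k : option (option 'I_m)) : R :=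
  if k is Some (Some i) then - (i == i0)%:R else 0.

Lemma strict_system_point (c : R) w i0 x0 (z : option 'I_n -> R) :
  polyhedron A b x0 -> c <= obj w x0 ->
  (forall k, dot (strict_row c w k) z <= strict_rhs i0 k) ->
  exists x, [/\ polyhedron A b x, c <= obj w x & Ax x i0 < bR i0].
Proof.
move=> /polyhedronE hx0 hx0w hz.
have hs : z None <= 0.
  have := hz (Some None); rewrite /dot sum_option /= mul1r big1 ?addr0 // => j _.
  by rewrite mul0r.
have hs1 : 0 < - z None + 1 by lra.
pose x := \col_j ((z (Some j) + x0 j 0) / (- z None + 1)).
have hx f : \sum_j f j * x j 0 =
    (\sum_j f j * z (Some j) + \sum_j f j * x0 j 0) / (- z None + 1).
  rewrite -big_split /= mulr_suml; apply: eq_bigr => j _; rewrite mxE.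
  by field; rewrite gt_eqF.
have hrow i : \sum_j aR i j * z (Some j) <= - (i == i0)%:R - bR i * z None.
  by have := hz (Some (Some i)); rewrite /dot sum_option /=; lra.
exists x; split.
- apply/polyhedronE => i; rewrite /Ax hx ler_pdivrMr // -/(Ax x0 i).
  by have := hrow i; have := hx0 i; have := ler0n R (i == i0); lra.
- rewrite /obj hx ler_pdivlMr // -/(obj w x0).
  have hobj : dot (strict_row c w None) z = - c * z None - \sum_j (w j 0)%:~R * z (Some j).
    rewrite /dot sum_option /= -sumrN; congr (_ + _).
    by apply: eq_bigr => j _; rewrite mulNr.
  by have := hz None; rewrite hobj /=; lra.
- rewrite /Ax hx ltr_pdivrMr // -/(Ax x0 i0).
  by have := hrow i0; have := hx0 i0; rewrite eqxx mulr1n; lra.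
Qed.

Lemma dual_optimal_strict w ys i0 : dual_optimal A b w ys ->
  (forall x, polyhedron A b x -> obj w x = dual_cost ys -> Ax x i0 = bR i0) ->
  exists y : 'cV[R]_m, dual_optimal A b w y /\ 0 < y i0 0.
Proof.
move=> hys himp; have [hy hopt] := hys.
have [x0 [hx0 hx0w]] := strong_duality hys.
have hx0w' : dual_cost ys <= obj w x0 by rewrite hx0w.
apply: contrapT => hne.
have /farkas [y [y0 ya yb]] : ~ feasible (strict_row (dual_cost ys) w) (strict_rhs i0).
  move=> [z /(strict_system_point hx0 hx0w')] [x [hx hxw]].
  by rewrite himp ?ltxx //; apply/le_anti; rewrite hxw weak_duality.
pose t := y None; pose s := y (Some None); pose u i := y (Some (Some i)).
have hua j : \sum_i u i * aR i j = t * (w j 0)%:~R.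
  by have := ya (Some j); rewrite !sum_option /= mulr0 add0r /u /t; lra.
have hub : \sum_i u i * bR i = t * dual_cost ys - s.
  by have := ya None; rewrite !sum_option /= mulr1 /u /t /s; lra.
have hu0 : 0 < u i0.
  move: yb; rewrite !sum_option /= !mulr0 !add0r.
  by under eq_bigr do rewrite mulrN mulrC; rewrite sumrN sum_delta_mul /u; lra.
have [hy' hc'] := dual_feasible_mix hy (y0 None) (fun i => y0 (Some (Some i))) hua.
have ht1 : 0 < t + 1 by have := y0 None; rewrite /t; lra.
apply: hne; exists (\col_i ((u i + ys i 0) / (t + 1))); split.
- split => // y' /hopt; apply: le_trans; rewrite !dual_costE hc' ler_pdivrMr // hub.
  by have := y0 (Some None); rewrite /t /s; lra.
- rewrite mxE divr_gt0 //; have [_ /(_ i0)] := proj1 (dual_feasibleE _ _) hy; lra.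
Qed.

End LinearProgramming.

Lemma face_subset (R : realType) n (P F : 'cV[R]_n -> Prop) :
  is_face P F -> forall x, F x -> P x.
Proof. by move=> [c [d [_ hF]]] x /hF []. Qed.

Section Faces.
Variable R : realType.
Variables (m n : nat) (A : 'M[int]_(m, n)) (b : 'cV[int]_m).
Implicit Types (F : 'cV[R]_n -> Prop) (x : 'cV[R]_n) (y ys : 'cV[R]_m) (w : 'cV[int]_n).

Definition supported (I : 'I_m -> Prop) (lam : 'I_m -> R) := forall i, ~ I i -> lam i = 0.

Definition optimal_face (w : 'cV[int]_n) (c : R) (x : 'cV[R]_n) :=
  polyhedron A b x /\ ((mxR R w)^T *m x) 0 0 = c.

Lemma optimal_faceE w c x : optimal_face w c x <-> polyhedron A b x /\ obj w x = c.
Proof. by rewrite /optimal_face objE. Qed.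

Lemma optimal_face_is_face w y : dual_feasible A w y ->
  is_face (polyhedron A b) (optimal_face w (dual_cost b y)).
Proof.
move=> hy; exists (mxR R w), (dual_cost b y); split => // x hx.
by rewrite objE (weak_duality hy hx).
Qed.

Lemma implicit_eqE F i : implicit_eq A b F i -> forall x, F x -> Ax A x i = bR R b i.
Proof. by move=> h x /h; rewrite AxE mxE. Qed.

Lemma not_implicit_eq F i :
  ~ implicit_eq A b F i -> exists2 x, F x & Ax A x i <> bR R b i.
Proof.
move=> h; apply: contrapT => hne; apply: h => x hx.
by apply: contrapT => hx'; apply: hne; exists x => //; rewrite AxE mxE in hx'.
Qed.

Lemma dual_cost_face F w y x : dual_feasible A w y ->
  supported (implicit_eq A b F) (fun i => y i 0) -> F x -> obj w x = dual_cost b y.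
Proof.
move=> hy hs hx; apply/eqP; rewrite eq_sym -subr_eq0 (dual_gap b x hy).
apply/eqP/big1 => i _; have [hi|hi] := pselect (implicit_eq A b F i).
  by rewrite (implicit_eqE hi hx) subrr mulr0.
by rewrite hs // mul0r.
Qed.

Lemma face_dual_optimal F w y : is_face (polyhedron A b) F -> (exists x, F x) ->
  dual_feasible A w y -> supported (implicit_eq A b F) (fun i => y i 0) ->
  dual_optimal A b w y.
Proof.
move=> hF [x hx] hy hs; split => // y' hy'.
rewrite !dual_costE -(dual_cost_face hy hs hx).
exact: weak_duality hy' (face_subset hF hx).
Qed.

Lemma dual_optimal_supported F w y : dual_feasible A w y ->
  (forall x, F x -> polyhedron A b x /\ obj w x = dual_cost b y) ->
  supported (implicit_eq A b F) (fun i => y i 0).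
Proof.
move=> hy hF i /not_implicit_eq [x /hF [hxP hxw] hne].
by case: (complementary_slackness hy hxP hxw i).
Qed.

Lemma dual_optimal_relint w ys : dual_optimal A b w ys ->
  let I := implicit_eq A b (optimal_face w (dual_cost b ys)) in
  exists y : 'cV[R]_m, [/\ dual_optimal A b w y, forall i, I i -> 0 < y i 0
              & supported I (fun i => y i 0)].
Proof.
move=> hys I.
have hstrict i : exists y : 'cV[R]_m, dual_optimal A b w y /\ (I i -> 0 < y i 0).
  have [hi|] := pselect (I i); last by exists ys.
  have [y [hy hyi]] := dual_optimal_strict hys (fun x hx hxw =>
    implicit_eqE hi (proj2 (optimal_faceE _ _ _) (conj hx hxw))).
  by exists y.
have [y [hy hpos]] : exists y : 'cV[R]_m, dual_optimal A b w y /\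
    forall i, i \in enum 'I_m -> I i -> 0 < y i 0.
  elim: (enum 'I_m) => [|i s [y [hy hpos]]]; first by exists ys.
  have [y' [hy' hy'i]] := hstrict i.
  exists (2^-1 *: (y + y')); split; first exact: dual_optimal_mid.
  have [[/dual_feasibleE [_ hy0] _] [/dual_feasibleE [_ hy'0] _]] := (hy, hy').
  move=> k; rewrite inE !mxE => /predU1P [->|/hpos hk] hIk; rewrite mulr_gt0 ?invr_gt0 //.
    by rewrite ltr_wpDl // hy'i.
  by rewrite ltr_wpDr // hk.
exists y; split => // [i hi|]; first by apply: hpos; rewrite ?mem_enum.
apply: dual_optimal_supported hy.1 _ => x /optimal_faceE [hx hxw].
by rewrite hxw (dual_optimal_cost hys hy).
Qed.

End Faces.

Section PadicRationals.
Variables (R : realType) (p : nat).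

Lemma padic_int (z : int) : padic p (z%:~R : R).
Proof. by exists z, 0%N; rewrite expr0 divr1. Qed.

Lemma padicM (x y : R) : padic p x -> padic p y -> padic p (x * y).
Proof.
move=> [a [k ->]] [a' [k' ->]]; exists (a * a'), (k + k')%N.
by rewrite exprD rmorphM invfM /= mulrACA.
Qed.

Lemma padic_invX k : padic p ((p%:R ^+ k)^-1 : R).
Proof. by exists 1, k; rewrite mul1r. Qed.

Hypothesis p_gt0 : (0 < p)%N.

Lemma padicD (x y : R) : padic p x -> padic p y -> padic p (x + y).
Proof.
have hpX k : (p%:R ^+ k : R) != 0 by rewrite expf_neq0 // pnatr_eq0 -lt0n.
move=> [a [k ->]] [a' [k' ->]].
exists (a * (p ^ k')%:Z + a' * (p ^ k)%:Z), (k + k')%N.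
have natz q : ((q%:Z)%:~R : R) = q%:R by [].
rewrite exprD intrD !intrM !natz !natrX.
by field; rewrite !hpX.
Qed.

End PadicRationals.

Section Archimedean.
Variable R : realType.

Lemma exists_expn_gt (x : R) p : (1 < p)%N -> exists k, x < p%:R ^+ k.
Proof.
move=> hp; exists (Num.trunc x).+1; apply: lt_le_trans (truncnS_gt x) _.
by rewrite -natrX ler_nat ltnW // ltn_expl.
Qed.

Lemma exists_expn_scale_gt (I : finType) (c : R) (v : I -> R) p : (1 < p)%N ->
  exists k, forall i, 0 < v i -> c < p%:R ^+ k * v i.
Proof.
move=> hp; have [k hk] := exists_expn_gt (\sum_(i | 0 < v i) `|c| / v i) hp.
exists k => i hi; rewrite -ltr_pdivrMr //; apply: le_lt_trans hk.
apply: (@le_trans _ _ (`|c| / v i)).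
  by apply: ler_wpM2r; [rewrite invr_ge0 ltW|exact: ler_norm].
rewrite (bigD1 i) //= lerDl; apply: sumr_ge0 => j /andP [hj _].
by rewrite divr_ge0 // ltW.
Qed.

Lemma fin_exists_ub (T : finType) (Q : T -> R -> Prop) :
  (forall t B B', B <= B' -> Q t B -> Q t B') ->
  (forall t, exists B, Q t B) -> exists B, forall t, Q t B.
Proof.
move=> hmono h.
suff [B hB] : exists B, forall t, t \in enum T -> Q t B.
  by exists B => t; apply: hB; rewrite mem_enum.
elim: (enum T) => [|t s [B2 h2]]; first by exists 0.
have [B1 h1] := h t; exists (Num.max B1 B2) => t'; rewrite inE => /predU1P [->|ht'].
  by apply: hmono h1; rewrite le_max lexx.
by apply: hmono (h2 _ ht'); rewrite le_max lexx orbT.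
Qed.

End Archimedean.

Section PadicGeneratingSets.
Variable R : realType.
Variables (m n : nat) (A : 'M[int]_(m, n)) (b : 'cV[int]_m) (p : nat).
Implicit Types (nu : 'I_m -> R) (I : 'I_m -> Prop) (v : 'I_n -> int).

Definition in_real_span I v := exists2 lam : 'I_m -> R, supported I lam & combines A lam v.

Definition padic_rep I v nu :=
  [/\ forall i, padic p (nu i), supported I nu & combines A nu v].

Lemma padic_gen_subspaceP I : padic_gen_subspace R p A I <->
  forall v : 'rV[int]_n, in_real_span I (v 0) ->
  exists nu, padic_rep I (v 0) nu.
Proof.
split=> H v.
  move=> [lam hl /combinesE hv]; have [|nu [hnp [hns /combinesE hnv]]] := H v.
    by exists lam.
  by exists nu.
move=> [lam [hl /combinesE hv]]; have [|nu [hnp hns /combinesE hnv]] := H v.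
  by exists lam.
by exists nu.
Qed.

Lemma intr_sum_rows (r : 'I_m -> int) j :
  ((\sum_i r i *: row i A) 0 j)%:~R = \sum_i (r i)%:~R * aR R A i j.
Proof. by rewrite summxE rmorph_sum; apply: eq_bigr => i _; rewrite !mxE rmorphM. Qed.

Lemma padic_gen_cone_of_tdp (F : 'cV[R]_n -> Prop) :
  totally_dual_padic R p A b -> is_face (polyhedron A b) F -> (exists x, F x) ->
  padic_gen_cone R p A (implicit_eq A b F).
Proof.
move=> htdp hF hne v [lam [hl0 [hls /combinesE hv]]].
pose y : 'cV[R]_m := \col_i lam i.
have hy : dual_feasible A v^T y.
  apply/dual_feasibleE; split => [j|i]; rewrite ?mxE // -hv.
  by apply: eq_bigr => i _; rewrite mxE.
have hys : supported (implicit_eq A b F) (fun i => y i 0) by move=> i /hls; rewrite mxE.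
have hyo := face_dual_optimal hF hne hy hys.
have [y1 [hy1o hy1p]] := htdp _ (ex_intro _ y hyo).
have [/dual_feasibleE [hy1 hy10] _] := hy1o.
exists (fun i => y1 i 0); split => //; split; last by apply/combinesE => j; rewrite hy1 mxE.
apply: (dual_optimal_supported hy1o.1) => x hx.
split; first exact: (face_subset hF hx).
by rewrite (dual_cost_face hy hys hx) (dual_optimal_cost hyo hy1o).
Qed.

Lemma padic_gen_subspace_of_cone I : (0 < p)%N ->
  padic_gen_cone R p A I -> padic_gen_subspace R p A I.
Proof.
move=> hp hcone v [lam [hls /combinesE hv]].
pose N i := Num.ceil `|lam i|.
pose v' : 'rV[int]_n := v + \sum_i N i *: row i A.
have hv' j : (v' 0 j)%:~R = (v 0 j)%:~R + \sum_i (N i)%:~R * aR R A i j :> R.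
  by rewrite mxE intrD intr_sum_rows.
have hN0 i : ~ I i -> N i = 0 by move=> hi; rewrite /N hls // normr0 ceil0.
have [|mu [hmu [hmus /combinesE hmuv]]] := hcone v'.
  exists (fun i => lam i + (N i)%:~R); split; [|split].
  - move=> i; rewrite addrC -[lam i]opprK subr_ge0.
    by apply: (le_trans _ (ceil_ge _)); rewrite ler_normr lexx orbT.
  - by move=> i hi; rewrite hls // hN0 // add0r.
  - apply/combinesE => j; rewrite hv' -hv -big_split /=.
    by apply: eq_bigr => i _; rewrite mulrDl.
exists (fun i => mu i + (- N i)%:~R); split; [|split].
- by move=> i; apply: padicD => //; [case: (hmu i)|apply: padic_int].
- by move=> i hi; rewrite hmus // hN0 // add0r.
- apply/combinesE => j.
  rewrite -[RHS](addrK (\sum_i (N i)%:~R * aR R A i j)) -hv' -hmuv -sumrB.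
  by apply: eq_bigr => i _; rewrite intrN mulrDl mulNr.
Qed.

Lemma padic_gen_subspace_bounded I (C : nat) :
  padic_gen_subspace R p A I ->
  exists B : R, forall v : 'rV[int]_n, (forall j, `|v 0 j| <= C%:Z) ->
    in_real_span I (v 0) ->
    exists2 nu : 'I_m -> R, padic_rep I (v 0) nu & forall i, `|nu i| <= B.
Proof.
move=> /padic_gen_subspaceP H.
pose g (t : {ffun 'I_n -> 'I_(C.*2.+1)}) : 'rV[int]_n := \row_j ((t j : nat)%:Z - C%:Z).
have [B hB] : exists B : R, forall t,
    in_real_span I (g t 0) ->
    exists2 nu : 'I_m -> R, padic_rep I (g t 0) nu & forall i, `|nu i| <= B.
  apply: fin_exists_ub => [t B B' hBB' hQ /hQ [nu hnu hnuB]|t].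
    by exists nu => // i; apply: le_trans (hnuB i) hBB'.
  have [/H [nu hnu]|] := pselect (in_real_span I (g t 0)).
    exists (\sum_i `|nu i|) => _; exists nu => // i.
    by rewrite (bigD1 i) //= lerDl sumr_ge0.
  by exists 0.
exists B => v hv; suff -> : v = g [ffun j => inord (absz (v 0 j + C%:Z))] by apply: hB.
apply/matrixP => i j; rewrite (ord1 i) !mxE ffunE inordK; have := hv j; lia.
Qed.

End PadicGeneratingSets.

Section Rounding.
Variable R : realType.
Variables (m n : nat) (A : 'M[int]_(m, n)) (b : 'cV[int]_m) (p : nat).

Lemma combines_unit_bound (fr : 'I_m -> R) (v : 'I_n -> int) :
  (forall i, 0 <= fr i <= 1) -> combines A fr v ->
  forall j, `|v j| <= \sum_i \sum_j `|A i j|.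
Proof.
move=> hfr hv j; rewrite -(ler_int R) intr_norm -hv rmorph_sum /=.
apply: le_trans (ler_norm_sum _ _ _) _; apply: ler_sum => i _.
apply: (@le_trans _ _ `|aR R A i j|).
  by rewrite normrM ler_piMl // ger0_norm; case/andP: (hfr i).
rewrite rmorph_sum (bigD1 j) //= intr_norm lerDl.
by apply: sumr_ge0 => j' _; rewrite ler0z.
Qed.

Lemma padic_dual_feasible (I : 'I_m -> Prop) w (yh : 'cV[R]_m) : (1 < p)%N ->
  padic_gen_subspace R p A I -> dual_feasible A w yh ->
  (forall i, I i -> 0 < yh i 0) -> supported I (fun i => yh i 0) ->
  exists y : 'cV[R]_m,
    [/\ dual_feasible A w y, supported I (fun i => y i 0) & forall i, padic p (y i 0)].
Proof.
move=> hp hsub /dual_feasibleE [hyh hyh0] hpos hsupp.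
have [B hB] := padic_gen_subspace_bounded (absz (\sum_i \sum_j `|A i j|)) hsub.
have [k hk] := exists_expn_scale_gt (1 + `|B|) (fun i => yh i 0) hp.
pose N : R := p%:R ^+ k.
have hN : 0 < N by rewrite exprn_gt0 // ltr0n ltnW.
pose r i := Num.floor (N * yh i 0).
pose fr i := N * yh i 0 - (r i)%:~R.
have hr0 i : ~ I i -> r i = 0 by move=> hi; rewrite /r hsupp // mulr0 floor0.
pose v : 'rV[int]_n := (p ^ k)%:Z *: w^T - \sum_i r i *: row i A.
have hvE j : (v 0 j)%:~R = N * (w j 0)%:~R - \sum_i (r i)%:~R * aR R A i j.
  by rewrite !mxE intrB intrM intr_sum_rows /N -natrX.
have hfr : combines A fr (v 0).
  move=> j; rewrite hvE /fr; under eq_bigr do rewrite mulrBl -mulrA.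
  by rewrite sumrB -mulr_sumr hyh.
have [j||nu [hnp hns hnv] hnB] := hB v.
- rewrite gez0_abs ?sumr_ge0 // => [|i _]; last exact: sumr_ge0.
  apply: combines_unit_bound hfr j => i.
  by have := floor_itv (N * yh i 0); rewrite /fr intrD; lra.
- by exists fr => // i hi; rewrite /fr hsupp // hr0 // mulr0 subr0.
exists (\col_i (((r i)%:~R + nu i) / N)); split.
- apply/dual_feasibleE; split => [j|i]; rewrite ?mxE.
    have -> : \sum_i (\col_i (((r i)%:~R + nu i) / N)) i 0 * aR R A i j =
              (\sum_i (r i)%:~R * aR R A i j + \sum_i nu i * aR R A i j) / N.
      by rewrite -big_split /= mulr_suml; apply: eq_bigr => i _; rewrite mxE mulrAC mulrDl.
    by rewrite hnv hvE addrC subrK mulrC mulKf ?lt0r_neq0.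
  apply: divr_ge0; last exact: ltW.
  have [hi|hi] := pselect (I i); last by rewrite hr0 // hns // addr0 ler0z.
  have := floorD1_gt (N * yh i 0); have := hk i (hpos i hi); have := hnB i.
  have := ler_norm B; have := ler_norm (- nu i); rewrite normrN intrD -/(r i) -/N; lra.
- by move=> i hi; rewrite mxE hr0 // hns // addr0 mul0r.
- move=> i; rewrite mxE; apply: padicM; last exact: padic_invX.
  by apply: padicD; [exact: ltnW|exact: padic_int|exact: hnp].
Qed.

Lemma tdp_of_padic_gen_subspace : (1 < p)%N ->
  (forall F : 'cV[R]_n -> Prop, is_face (polyhedron A b) F -> (exists x, F x) ->
     padic_gen_subspace R p A (implicit_eq A b F)) ->
  totally_dual_padic R p A b.
Proof.
move=> hp hsub w [ys hys].
have hF := optimal_face_is_face b hys.1.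
have [x0 [hx0 hx0w]] := strong_duality hys.
have hne : exists x, optimal_face A b w (dual_cost b ys) x.
  by exists x0; apply/optimal_faceE.
have [yh [hyh hpos hsupp]] := dual_optimal_relint hys.
have [y [hy hys' hyp]] := padic_dual_feasible hp (hsub _ hF hne) hyh.1 hpos hsupp.
by exists y; split => //; apply: face_dual_optimal hF hne hy hys'.
Qed.

End Rounding.

Unset Implicit Arguments.

Theorem theorem1p1 (R : realType) (m n : nat) (A : 'M[int]_(m, n)) (b : 'cV[int]_m)
  (p : nat) (hp : prime p) :
  (totally_dual_padic R p A b <->
     (forall F : 'cV[R]_n -> Prop, is_face (polyhedron A b) F -> (exists x, F x) ->
        padic_gen_cone R p A (implicit_eq A b F))) /\
  (totally_dual_padic R p A b <->
     (forall F : 'cV[R]_n -> Prop, is_face (polyhedron A b) F -> (exists x, F x) ->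
        padic_gen_subspace R p A (implicit_eq A b F))).
Proof.
have cone_of_tdp F := @padic_gen_cone_of_tdp R m n A b p F.
have subspace_of_cone F :=
  @padic_gen_subspace_of_cone R m n A p (implicit_eq A b F) (prime_gt0 hp).
have tdp_of_subspace := @tdp_of_padic_gen_subspace R m n A b p (prime_gt1 hp).
split; split => [htdp F hF hne|H].
- exact: cone_of_tdp.
- by apply: tdp_of_subspace => F hF hne; apply/subspace_of_cone/H.
- by apply/subspace_of_cone/cone_of_tdp.
- exact: tdp_of_subspace.
Qed.
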